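(* Let $G=(V,E)$ be an undirected graph (finite or infinite), $X$ a ``strong'' partitive set of $G$, and $M=M(S)$ a multiplex of $G$ generated by a simplex $S=(V_S,E_S)$. If $M\cap E(X)\neq\emptyset$, then $M\subseteq E(X)$.
   Context: A graph $G=(V,E)$ has vertex set $V$ and edge set $E\subseteq V^2$; it is undirected if $E$ is irreflexive and symmetric. For $X\subseteq V$, $E(X)=\{(a,b)\in E:a,b\in X\}$. A set $X\subseteq V$ is a partitive set of $G$ if for all $a,b\in X$ and $c\in V\setminus X$: $(a,c)\in E\Leftrightarrow(b,c)\in E$ and $(c,a)\in E\Leftrightarrow(c,b)\in E$; $I(G)$ is the class of partitive sets. A ``strong'' partitive set is an $X\in I(G)$ such that for every $Y\in I(G)$ with $X\cap Y\neq\emptyset$, $X\subseteq Y$ or $Y\subseteq X$. Implication classes: on $E$ define $(a,b)\Gamma(a',b')$ iff either $a=a'$ and $(b,b')\notin E$, or $b=b'$ and $(a,a')\notin E$; the classes of the transitive closure $\Gamma^*$ are the implication classes. For an implication class $A$, $A^{-1}=\{(b,a):(a,b)\in A\}$ and the color class is $\widehat A=A\cup A^{-1}$. A simplex of rank $r\ge1$ is a complete sub-graph $S=(V_S,E_S)$ of $G$ on $r+1$ vertices whose distinct undirected edges lie in distinct color classes. The multiplex generated by $S$ is $M(S)=\bigcup\{\widehat A:\widehat A\text{ a color class},\ \widehat A\cap E_S\neq\emptyset\}$. *)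

From Stdlib Require Import List Relations.
Import ListNotations.

Section GraphDefs.
Variable V : Type.
Variable E : V -> V -> Prop.

Definition undirected : Prop :=
  (forall a, ~ E a a) /\ (forall a b, E a b -> E b a).

Definition edges_in (X : V -> Prop) (p : V * V) : Prop :=
  E (fst p) (snd p) /\ X (fst p) /\ X (snd p).

Definition partitive (X : V -> Prop) : Prop :=
  forall a b c, X a -> X b -> ~ X c ->
    (E a c <-> E b c) /\ (E c a <-> E c b).

Definition strong_partitive (X : V -> Prop) : Prop :=
  partitive X /\
  forall Y, partitive Y -> (exists v, X v /\ Y v) ->
    (forall v, X v -> Y v) \/ (forall v, Y v -> X v).

Definition Gamma (p q : V * V) : Prop :=
  E (fst p) (snd p) /\ E (fst q) (snd q) /\
  ((fst p = fst q /\ ~ E (snd p) (snd q)) \/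
   (snd p = snd q /\ ~ E (fst p) (fst q))).

Definition impl_class (p : V * V) (q : V * V) : Prop :=
  E (fst q) (snd q) /\ clos_refl_trans (V * V) Gamma p q.

Definition swap (q : V * V) : V * V := (snd q, fst q).

Definition color_class (p : V * V) (q : V * V) : Prop :=
  impl_class p q \/ impl_class p (swap q).

Definition simplex_edges (vs : list V) (e : V * V) : Prop :=
  In (fst e) vs /\ In (snd e) vs /\ E (fst e) (snd e).

(* S is a simplex of rank r = length vs - 1 >= 1 *)
Definition simplex (vs : list V) : Prop :=
  NoDup vs /\ 2 <= length vs /\
  (forall a b, In a vs -> In b vs -> a <> b -> E a b) /\
  (forall a b c d, In a vs -> In b vs -> In c vs -> In d vs ->
     a <> b -> c <> d -> ~ ((a = c /\ b = d) \/ (a = d /\ b = c)) ->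
     ~ (forall q, color_class (a, b) q <-> color_class (c, d) q)).

Definition multiplex (vs : list V) (q : V * V) : Prop :=
  exists p, E (fst p) (snd p) /\
    (exists e, simplex_edges vs e /\ color_class p e) /\
    color_class p q.

End GraphDefs.

From Stdlib Require Import List Relations Classical.

(* A partitive set X is stable under Gamma: a Gamma-step out of an edge of
   E(X) stays in E(X).  So a color class meeting E(X) lies inside E(X); in
   particular some edge of the simplex lies in E(X), and it suffices to show
   that every vertex of the simplex lies in X.  Suppose a vertex vk of the
   simplex is outside X while the ends vi, vj of that edge are in X, so that
   vk vi and vk vj lie in distinct color classes.  Following Gamma-paths, every
   edge of the color class A of vk vi joins X to an outside vertex that
   "behaves like vk" towards X.  Hence the vertex set spanned by A is
   partitive; it contains vk and vi but not vj, so it overlaps X without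
   either set containing the other, contradicting the strength of X. *)

Section ColorClasses.

Variables (V : Type) (E : V -> V -> Prop).
Hypothesis E_undirected : undirected V E.

Lemma E_sym a b : E a b -> E b a.
Proof. apply E_undirected. Qed.

Lemma swapK (q : V * V) : swap V (swap V q) = q.
Proof. now destruct q. Qed.

Lemma Gamma_sym p q : Gamma V E p q -> Gamma V E q p.
Proof.
  destruct p as [p1 p2], q as [q1 q2]; unfold Gamma; simpl.
  intros (Ep & Eq & [[-> nE] | [-> nE]]); repeat split; auto.
  - left; split; auto. intro H; apply nE, E_sym, H.
  - right; split; auto. intro H; apply nE, E_sym, H.
Qed.

Lemma Gamma_swap p q : Gamma V E p q -> Gamma V E (swap V p) (swap V q).
Proof.
  destruct p as [p1 p2], q as [q1 q2]; unfold Gamma, swap; simpl.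
  intros (Ep & Eq & H); repeat split; try apply E_sym; tauto.
Qed.

Lemma Gamma_rt_sym p q :
  clos_refl_trans _ (Gamma V E) p q -> clos_refl_trans _ (Gamma V E) q p.
Proof.
  induction 1.
  - now apply rt_step, Gamma_sym.
  - apply rt_refl.
  - eapply rt_trans; eauto.
Qed.

Lemma Gamma_rt_swap p q :
  clos_refl_trans _ (Gamma V E) p q ->
  clos_refl_trans _ (Gamma V E) (swap V p) (swap V q).
Proof.
  induction 1.
  - now apply rt_step, Gamma_swap.
  - apply rt_refl.
  - eapply rt_trans; eauto.
Qed.

Lemma color_class_refl p : E (fst p) (snd p) -> color_class V E p p.
Proof. left; split; [assumption | apply rt_refl]. Qed.

Lemma color_class_edge p q : color_class V E p q -> E (fst q) (snd q).
Proof. destruct q; intros [[H _] | [H _]]; simpl in *; auto using E_sym. Qed.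

Lemma color_class_swap p q : color_class V E p q -> color_class V E p (swap V q).
Proof. intros [H | H]; [right | left]; rewrite ?swapK; exact H. Qed.

Lemma color_class_Gamma p q r :
  color_class V E p q -> Gamma V E q r -> color_class V E p r.
Proof.
  intros [[_ H] | [_ H]] G.
  - left; split; [apply G |]. eapply rt_trans; [exact H | now apply rt_step].
  - right. pose proof (Gamma_swap _ _ G) as G'. split; [apply G' |].
    eapply rt_trans; [exact H | now apply rt_step].
Qed.

Lemma color_class_sym p q :
  E (fst p) (snd p) -> color_class V E p q -> color_class V E q p.
Proof.
  destruct p as [p1 p2]; simpl; intros Ep [[_ H] | [_ H]].
  - left; split; auto. now apply Gamma_rt_sym.
  - right; split; [now apply E_sym |].
    rewrite <- (swapK q). now apply Gamma_rt_swap, Gamma_rt_sym.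
Qed.

Lemma color_class_rt p q r :
  color_class V E p q -> clos_refl_trans _ (Gamma V E) q r -> color_class V E p r.
Proof.
  intros Cpq H; induction H; eauto using color_class_Gamma.
Qed.

Lemma color_class_trans p q r :
  color_class V E p q -> color_class V E q r -> color_class V E p r.
Proof.
  intros Cpq [[_ H] | [_ H]].
  - exact (color_class_rt _ _ _ Cpq H).
  - rewrite <- (swapK r). exact (color_class_swap _ _ (color_class_rt _ _ _ Cpq H)).
Qed.

Definition span (A : V * V -> Prop) (y : V) : Prop :=
  exists q, A q /\ (fst q = y \/ snd q = y).

Lemma color_class_span_adj p q c :
  color_class V E p q -> ~ span (color_class V E p) c ->
  (E (fst q) c <-> E (snd q) c).
Proof.
  destruct q as [q1 q2]; simpl; intros Cq nc.
  pose proof (color_class_edge _ _ Cq) as Eq; simpl in Eq.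
  split; intro H; apply NNPP; intro nH; apply nc.
  - exists (q1, c); split; [| now right].
    apply (color_class_Gamma _ _ _ Cq). repeat split; simpl; auto.
  - exists (c, q2); split; [| now left].
    apply (color_class_Gamma _ _ _ Cq). repeat split; simpl; auto using E_sym.
Qed.

Section Partitive.

Variable X : V -> Prop.
Hypothesis X_partitive : partitive V E X.

Lemma partitive_adj a b c : X a -> X b -> ~ X c -> E a c -> E b c.
Proof. intros Xa Xb nXc. apply (X_partitive a b c Xa Xb nXc). Qed.

Lemma edges_in_Gamma p q : Gamma V E p q -> edges_in V E X p -> edges_in V E X q.
Proof.
  destruct p as [p1 p2], q as [q1 q2]; unfold Gamma, edges_in; simpl.
  intros (_ & Eq & [[<- nE] | [<- nE]]) (Ep & X1 & X2); repeat split; auto;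
    apply NNPP; intro nX.
  - apply nE, (partitive_adj p1); auto.
  - apply nE, (partitive_adj p2); auto using E_sym.
Qed.

Lemma edges_in_color_class p q :
  color_class V E p q -> edges_in V E X p -> edges_in V E X q.
Proof.
  assert (rt : forall r s, clos_refl_trans _ (Gamma V E) r s ->
            edges_in V E X r -> edges_in V E X s).
  { induction 1; eauto using edges_in_Gamma. }
  destruct q as [q1 q2]; intros [[_ H] | [_ H]] Hp.
  - exact (rt _ _ H Hp).
  - destruct (rt _ _ H Hp) as (Eq & X1 & X2). repeat split; auto using E_sym.
Qed.

Lemma edges_in_color_class_transfer p q r :
  E (fst p) (snd p) -> color_class V E p q -> color_class V E p r ->
  edges_in V E X q -> edges_in V E X r.
Proof.
  intros Ep Cq Cr Hq. apply (edges_in_color_class p); auto.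
  apply (edges_in_color_class q); auto using color_class_sym.
Qed.

Section CrossingEdge.

Variables vk vi vj : V.
Hypotheses (nX_vk : ~ X vk) (X_vi : X vi) (X_vj : X vj) (E_vk_vi : E vk vi).
Hypothesis not_color_class_vj : ~ color_class V E (vk, vi) (vk, vj).

Local Notation A := (color_class V E (vk, vi)).

Definition apex_like (w : V) : Prop :=
  ~ X w /\ forall z, X z -> A (w, z) -> A (vk, z).

Definition joins_apex_like (e : V * V) : Prop :=
  (X (fst e) /\ apex_like (snd e)) \/ (X (snd e) /\ apex_like (fst e)).

Lemma joins_apex_like_swap e : joins_apex_like (swap V e) <-> joins_apex_like e.
Proof. unfold joins_apex_like; destruct e; simpl; tauto. Qed.

Lemma joins_apex_like_Gamma_fst s a b :
  E s a -> ~ E a b -> A (s, b) -> joins_apex_like (s, a) -> joins_apex_like (s, b).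
Proof.
  unfold joins_apex_like; simpl; intros Esa nEab Asb.
  pose proof (color_class_edge _ _ Asb) as Esb; simpl in Esb.
  intros [[Xs [nXa Ka]] | [Xa [nXs Ks]]].
  - assert (nXb : ~ X b).
    { intro Xb. apply nEab, E_sym, (partitive_adj s); auto. }
    left; repeat split; auto. intros z Xz Abz. apply Ka; auto.
    assert (Eaz : E a z) by (apply E_sym, (partitive_adj s); auto).
    pose proof (color_class_edge _ _ Abz) as Ebz.
    apply (color_class_Gamma _ _ _ Abz).
    repeat split; simpl; auto.
    right; split; auto. intro H; apply nEab, E_sym, H.
  - destruct (classic (X b)) as [Xb | nXb]; [now right |].
    exfalso. apply not_color_class_vj, Ks; auto.
    assert (Esvj : E s vj) by (apply E_sym, (partitive_adj a); auto using E_sym).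
    apply (color_class_Gamma _ _ _ Asb).
    repeat split; simpl; auto.
    left; split; auto. intro H; apply nEab, (partitive_adj vj); auto using E_sym.
Qed.

Lemma joins_apex_like_Gamma y q :
  Gamma V E y q -> A q -> joins_apex_like y -> joins_apex_like q.
Proof.
  destruct y as [y1 y2], q as [q1 q2]; unfold Gamma; simpl.
  intros (Ey & _ & [[<- nE] | [<- nE]]) Aq Jy.
  - exact (joins_apex_like_Gamma_fst _ _ _ Ey nE Aq Jy).
  - apply joins_apex_like_swap, (joins_apex_like_Gamma_fst y2 y1 q1);
      auto using E_sym.
    + exact (color_class_swap _ _ Aq).
    + now apply joins_apex_like_swap.
Qed.

Lemma color_class_joins_apex_like q : A q -> joins_apex_like q.
Proof.
  assert (reach : forall r, clos_refl_trans _ (Gamma V E) (vk, vi) r ->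
                    joins_apex_like r).
  { apply clos_refl_trans_ind_left.
    - right; simpl; repeat split; auto.
    - intros y r Hy Jy G. apply (joins_apex_like_Gamma y); auto.
      apply (color_class_Gamma _ y); auto.
      left; split; [apply G | exact Hy]. }
  intros [[_ H] | [_ H]]; [| apply joins_apex_like_swap]; exact (reach _ H).
Qed.

Lemma crossing_adj_like_vi q c :
  A q -> X (fst q) -> ~ X (snd q) -> ~ span A c -> (E (fst q) c <-> E vi c).
Proof.
  destruct q as [q1 q2]; simpl; intros Aq X1 nX2 nc.
  pose proof (color_class_edge _ _ Aq) as Eq.
  pose proof (color_class_span_adj _ _ _ Aq nc) as Lq.
  pose proof (color_class_span_adj _ _ _ (color_class_refl (vk, vi) E_vk_vi) nc) as L0.
  simpl in *.
  destruct (classic (X c)) as [Xc | nXc].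
  - assert (E q2 c) by (apply E_sym, (partitive_adj q1); auto).
    assert (E vk c) by (apply E_sym, (partitive_adj vi); auto using E_sym).
    tauto.
  - split; apply partitive_adj; auto.
Qed.

Lemma span_adj_like_vi x c : span A x -> ~ span A c -> (E x c <-> E vi c).
Proof.
  intros Sx nc.
  assert (oriented : exists q, A q /\ X (fst q) /\ ~ X (snd q) /\
                                (fst q = x \/ snd q = x)).
  { destruct Sx as [q [Aq Hx]].
    destruct (color_class_joins_apex_like q Aq) as [[X1 [nX2 _]] | [X2 [nX1 _]]].
    - exists q; auto.
    - exists (swap V q). destruct q; simpl in *.
      repeat split; auto using color_class_swap; tauto. }
  destruct oriented as [q (Aq & X1 & nX2 & [<- | <-])].
  - exact (crossing_adj_like_vi q c Aq X1 nX2 nc).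
  - rewrite <- (color_class_span_adj _ _ _ Aq nc).
    exact (crossing_adj_like_vi q c Aq X1 nX2 nc).
Qed.

Lemma span_partitive : partitive V E (span A).
Proof.
  intros a b c Sa Sb nc.
  pose proof (span_adj_like_vi a c Sa nc).
  pose proof (span_adj_like_vi b c Sb nc).
  pose proof (E_sym a c); pose proof (E_sym c a).
  pose proof (E_sym b c); pose proof (E_sym c b).
  tauto.
Qed.

Lemma span_excludes_vj : ~ span A vj.
Proof.
  intros [[q1 q2] [Aq Hq]].
  destruct (color_class_joins_apex_like _ Aq) as [[X1 [nX2 K2]] | [X2 [nX1 K1]]];
    simpl in *; destruct Hq as [<- | <-]; try contradiction.
  - apply not_color_class_vj, K2; auto. exact (color_class_swap _ _ Aq).
  - apply not_color_class_vj, K1; auto.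
Qed.

End CrossingEdge.

End Partitive.

Lemma strong_partitive_outer_edges_color_class X vk vi vj :
  strong_partitive V E X -> ~ X vk -> X vi -> X vj -> E vk vi ->
  color_class V E (vk, vi) (vk, vj).
Proof.
  intros [P St] nXk Xi Xj Eki. apply NNPP; intro nA.
  set (Y := span (color_class V E (vk, vi))).
  assert (Y_vk_vi : Y vk /\ Y vi).
  { split; exists (vk, vi); split; simpl; auto using color_class_refl. }
  destruct (St Y (span_partitive X P vk vi vj nXk Xi Xj Eki nA))
    as [XY | YX]; [now exists vi |..].
  - exact (span_excludes_vj X P vk vi vj nXk Xi Xj nA (XY vj Xj)).
  - exact (nXk (YX vk (proj1 Y_vk_vi))).
Qed.

Lemma simplex_in_strong_partitive X vs vi vj :
  strong_partitive V E X -> simplex V E vs ->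
  In vi vs -> In vj vs -> vi <> vj -> X vi -> X vj ->
  forall v, In v vs -> X v.
Proof.
  intros St (_ & _ & complete & distinct) Ini Inj nij Xi Xj v Inv.
  apply NNPP; intro nXv.
  assert (v <> vi) by (intros ->; contradiction).
  assert (v <> vj) by (intros ->; contradiction).
  assert (Evi : E v vi) by auto.
  pose proof (strong_partitive_outer_edges_color_class X v vi vj St nXv Xi Xj Evi) as C.
  apply (distinct v vi v vj); auto; [intuition |].
  intro r; split; intro Cr.
  - exact (color_class_trans _ _ _ (color_class_sym (v, vi) _ Evi C) Cr).
  - exact (color_class_trans _ _ _ C Cr).
Qed.

End ColorClasses.

Theorem theorem3p7 (V : Type) (E : V -> V -> Prop) (X : V -> Prop)
    (vs : list V) :
  undirected V E ->
  strong_partitive V E X ->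
  simplex V E vs ->
  (exists q, multiplex V E vs q /\ edges_in V E X q) ->
  forall q, multiplex V E vs q -> edges_in V E X q.
Proof.
  intros U St S [q0 [[p [Ep [[[vi vj] [Se Ce]] Cq0]]] Hq0]]
         q [p' [Ep' [[[a b] [[Ina [Inb Eab]] Ce']] Cq]]].
  pose proof (proj1 St) as P.
  destruct Se as [Ini [Inj _]].
  destruct (edges_in_color_class_transfer V E U X P _ _ _ Ep Cq0 Ce Hq0)
    as (Eij & Xi & Xj); simpl in *.
  assert (nij : vi <> vj) by (intros ->; exact (proj1 U vj Eij)).
  pose proof (simplex_in_strong_partitive V E U X vs vi vj St S Ini Inj nij Xi Xj)
    as S_in_X.
  apply (edges_in_color_class_transfer V E U X P _ _ _ Ep' Ce' Cq).
  repeat split; simpl; auto.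
Qed.
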